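(* For $k\ge4$ and $d\in[d_{\mathrm{lbd}}(k),d_{\mathrm{ubd}}(k)]$, $\Psi_d(\frac12-\frac1{2^k})>\frac12-\frac1{2^k}$.
   Context: $\hat\Psi(x)=\frac{1-2x^{k-1}}{1-x^{k-1}}$, $\dot\Psi(v)=\frac{1-v^{d-1}}{2-v^{d-1}}$, $\Psi_d=\dot\Psi\circ\hat\Psi$ ($d$ real). $d_{\mathrm{lbd}}(4)=16.7$, $d_{\mathrm{lbd}}(k)=(2^{k-1}-2)k\log2$ for $k\ge5$; $d_{\mathrm{ubd}}(k)=2^{k-1}k\log2$. *)

From Stdlib Require Import Reals.
Open Scope R_scope.

Definition Psi_hat (k : nat) (x : R) : R :=
  (1 - 2 * x ^ (k - 1)) / (1 - x ^ (k - 1)).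

(* dot Psi (v) = (1 - v^(d-1)) / (2 - v^(d-1)),  d real; real power via Rpower
   (only used at v > 0) *)
Definition Psi_dot (d : R) (v : R) : R :=
  (1 - Rpower v (d - 1)) / (2 - Rpower v (d - 1)).

Definition Psi (k : nat) (d : R) (x : R) : R := Psi_dot d (Psi_hat k x).

Definition d_lbd (k : nat) : R :=
  if (k =? 4)%nat then 167 / 10
  else (2 ^ (k - 1) - 2) * INR k * ln 2.

Definition d_ubd (k : nat) : R := 2 ^ (k - 1) * INR k * ln 2.

From Stdlib Require Import Reals Lra Lia.
Open Scope R_scope.

(** Write [N = 2^(k-1)], so that [x = 1/2 - 1/(2N)], and [v = Psi_hat k x].
    Then [Psi_d x > x] amounts to [v^(d-1) (N+1) < 2].  For [k = 4]
    this is a single exact comparison of rationals, [(3410/3753)^157 <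
    (2/9)^10].  For [k >= 5], [ln v <= v - 1 <= -x^(k-1) <= -(1 - (k-1)/N)/N]
    by Bernoulli's inequality, while [ln ((N+1)/2) <= (k-2) ln 2 + 1/N]; the
    lower bound [d >= (N-2) k ln 2] then wins by a polynomial-versus-[2^k]
    margin. *)

Lemma ln_le_sub_1 (x : R) : 0 < x -> ln x <= x - 1.
Proof.
  intros Hx. assert (H := exp_ineq1_le (ln x)). rewrite exp_ln in H; lra.
Qed.

Lemma pow_one_sub_ge (t : R) (n : nat) : 0 <= t <= 1 -> 1 - INR n * t <= (1 - t) ^ n.
Proof.
  intros Ht. induction n as [|n IH].
  - simpl. lra.
  - rewrite S_INR. simpl.
    assert (0 <= INR n) by apply pos_INR.
    assert ((1 - t) * (1 - INR n * t) <= (1 - t) * (1 - t) ^ n)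
      by (apply Rmult_le_compat_l; lra).
    nra.
Qed.

Lemma Rpower_le_base_le_1 (v e1 e2 : R) :
  0 < v <= 1 -> e1 <= e2 -> Rpower v e2 <= Rpower v e1.
Proof.
  intros Hv He. unfold Rpower.
  assert (Hln : ln v <= 0) by (assert (H := ln_le_sub_1 v (proj1 Hv)); lra).
  assert (Hexp : e2 * ln v <= e1 * ln v) by nra.
  destruct (Rle_lt_or_eq_dec _ _ Hexp) as [Hlt | ->].
  - apply Rlt_le, exp_increasing, Hlt.
  - lra.
Qed.

Lemma Rpower_div_lt (v c : R) (p q : nat) :
  0 < v -> 0 < c -> (0 < q)%nat -> v ^ p < c ^ q -> Rpower v (INR p / INR q) < c.
Proof.
  intros Hv Hc Hq Hpq.
  set (y := Rpower v (INR p / INR q)).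
  assert (Hy : 0 < y) by apply exp_pos.
  assert (Hyq : y ^ q = v ^ p).
  { rewrite <- (Rpower_pow q y Hy), <- (Rpower_pow p v Hv). unfold y.
    rewrite Rpower_mult. f_equal. field. apply not_0_INR. lia. }
  destruct (Rlt_or_le y c) as [Hlt | Hle]; [exact Hlt |].
  assert (c ^ q <= y ^ q) by (apply pow_incr; lra).
  lra.
Qed.

Lemma Psi_dot_gt_half_sub (N d v : R) :
  0 < N -> Rpower v (d - 1) * (N + 1) < 2 -> Psi_dot d v > 1/2 - 1/(2*N).
Proof.
  intros HN HW. unfold Psi_dot.
  set (W := Rpower v (d - 1)) in *.
  assert (0 < W) by apply exp_pos.
  assert (E : (1 - W) / (2 - W) - (1/2 - 1/(2*N)) = (2 - W * (N + 1)) / (2 * N * (2 - W)))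
    by (field; nra).
  assert (0 < (2 - W * (N + 1)) / (2 * N * (2 - W)))
    by (apply Rdiv_lt_0_compat; nra).
  lra.
Qed.

Lemma ln_Psi_hat_le (k : nat) (x : R) :
  0 < x ^ (k - 1) < 1/2 -> ln (Psi_hat k x) <= - x ^ (k - 1).
Proof.
  unfold Psi_hat. set (a := x ^ (k - 1)). intros Ha.
  eapply Rle_trans; [apply ln_le_sub_1, Rdiv_lt_0_compat; lra |].
  replace ((1 - 2 * a) / (1 - a) - 1) with (- (a / (1 - a))) by (field; lra).
  apply Ropp_le_contravar, (Rmult_le_reg_r (1 - a)); [lra |].
  unfold Rdiv. rewrite Rmult_assoc, Rinv_l; nra.
Qed.

Lemma Rpower_mul_lt (v e M c : R) :
  0 < v -> 0 < M -> 0 < c -> e * ln v < ln c - ln M -> Rpower v e * M < c.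
Proof.
  intros Hv HM Hc He.
  replace (ln c - ln M) with (ln (c / M)) in He
    by (unfold Rdiv; rewrite ln_mult, ln_Rinv; try apply Rinv_0_lt_compat; lra).
  apply exp_increasing in He. rewrite exp_ln in He by (apply Rdiv_lt_0_compat; lra).
  apply (Rmult_lt_compat_r M) in He; [| lra].
  unfold Rpower. replace (c / M * M) with c in He by (field; lra). exact He.
Qed.

Lemma pow_half_sub_inv_bounds (n : nat) :
  1 / 2 ^ n * (1 - INR n / 2 ^ n) <= (1/2 - 1/(2 * 2 ^ n)) ^ n <= 1 / 2 ^ n.
Proof.
  assert (HN : 1 <= 2 ^ n) by (apply pow_R1_Rle; lra).
  replace (1/2 - 1/(2 * 2 ^ n)) with (/ 2 * (1 - / 2 ^ n)) by (field; lra).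
  rewrite Rpow_mult_distr, pow_inv.
  assert (Hinv : 0 < / 2 ^ n <= 1).
  { split; [apply Rinv_0_lt_compat | rewrite <- Rinv_1; apply Rinv_le_contravar]; lra. }
  assert (Hlo := pow_one_sub_ge (/ 2 ^ n) n ltac:(lra)).
  assert (Hhi : (1 - / 2 ^ n) ^ n <= 1) by (rewrite <- (pow1 n) at 2; apply pow_incr; lra).
  unfold Rdiv. rewrite !Rmult_1_l.
  split; nra.
Qed.

Lemma ln_pow2_add_1_le (n : nat) : ln (2 ^ n + 1) <= INR n * ln 2 + 1 / 2 ^ n.
Proof.
  assert (HN : 1 <= 2 ^ n) by (apply pow_R1_Rle; lra).
  assert (0 < 1 / 2 ^ n) by (apply Rdiv_lt_0_compat; lra).
  replace (2 ^ n + 1) with (2 ^ n * (1 + 1 / 2 ^ n)) by (field; lra).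
  rewrite ln_mult, ln_pow by lra.
  assert (ln (1 + 1 / 2 ^ n) <= 1 / 2 ^ n) by (eapply Rle_trans; [apply ln_le_sub_1 |]; lra).
  lra.
Qed.

Lemma pow2_ge_16 (n : nat) : (4 <= n)%nat -> 16 <= 2 ^ n.
Proof.
  intros Hn. replace 16 with (2 ^ 4) by (simpl; ring). apply Rle_pow; [lra | exact Hn].
Qed.

Lemma quadratic_le_pow2 (n : nat) : (5 <= n)%nat -> ((n + 1) * (n + 2) + 4 <= 2 * 2 ^ n)%nat.
Proof.
  intros H. induction H.
  - simpl. lia.
  - rewrite Nat.pow_succ_r'. nia.
Qed.

Lemma quadratic_pow2_gap (n : nat) : (4 <= n)%nat ->
  ((INR n + 1) * (INR n + 2) + 4) * 2 ^ n < 2 * 2 ^ n * 2 ^ n + 2 * INR n * (INR n + 1).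
Proof.
  intros Hn. destruct (Nat.eq_dec n 4) as [-> | Hn4].
  - simpl. lra.
  - assert (Hq := le_INR _ _ (quadratic_le_pow2 n ltac:(lia))).
    rewrite plus_INR, !mult_INR, !plus_INR, pow_INR in Hq.
    replace (INR 1) with 1 in Hq by reflexivity.
    replace (INR 2) with 2 in Hq by (simpl; ring).
    replace (INR 4) with 4 in Hq by (simpl; ring).
    assert (0 < 2 ^ n) by (apply pow_lt; lra).
    assert (0 < INR n) by (apply lt_0_INR; lia).
    assert (((INR n + 1) * (INR n + 2) + 4) * 2 ^ n <= 2 * 2 ^ n * 2 ^ n)
      by (apply Rmult_le_compat_r; lra).
    nra.
Qed.

Lemma d_lbd_margin (n : nat) (L : R) : (4 <= n)%nat -> / 2 < L ->
  (INR n - 1) * L + 1 / 2 ^ n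
  < ((2 ^ n - 2) * (INR n + 1) * L - 1) * (1 / 2 ^ n * (1 - INR n / 2 ^ n)).
Proof.
  intros Hn HL.
  assert (Hgap := quadratic_pow2_gap n Hn).
  set (N := 2 ^ n) in *. set (m := INR n) in *.
  assert (HN : 16 <= N) by apply pow2_ge_16, Hn.
  assert (Hm : 4 <= m) by (replace 4 with (INR 4) by (simpl; ring); apply le_INR, Hn).
  apply (Rmult_lt_reg_r (N * N)); [nra |].
  replace (((N - 2) * (m + 1) * L - 1) * (1 / N * (1 - m / N)) * (N * N))
    with (L * ((N - 2) * (m + 1) * (N - m)) - (N - m)) by (field; lra).
  replace (((m - 1) * L + 1 / N) * (N * N)) with (L * ((m - 1) * N * N) + N) by (field; lra).
  nra.
Qed.

Lemma Rpower_Psi_hat_lt_k_ge_5 (n : nat) (d : R) :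
  (4 <= n)%nat -> (2 ^ n - 2) * INR (S n) * ln 2 <= d ->
  Rpower (Psi_hat (S n) (1/2 - 1/(2 * 2 ^ n))) (d - 1) * (2 ^ n + 1) < 2.
Proof.
  intros Hn Hd.
  assert (Hbounds := pow_half_sub_inv_bounds n).
  assert (Hmargin := d_lbd_margin n (ln 2) Hn ln_lt_2).
  assert (HlnN := ln_pow2_add_1_le n).
  assert (Hlnv := ln_Psi_hat_le (S n) (1/2 - 1/(2 * 2 ^ n))).
  rewrite Nat.sub_succ, Nat.sub_0_r in Hlnv.
  rewrite S_INR in Hd.
  set (N := 2 ^ n) in *. set (m := INR n) in *. set (L := ln 2) in *.
  set (a := (1/2 - 1/(2 * N)) ^ n) in *.
  assert (HN : 16 <= N) by apply pow2_ge_16, Hn.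
  assert (Hm : 4 <= m) by (replace 4 with (INR 4) by (simpl; ring); apply le_INR, Hn).
  assert (HL : / 2 < L) by apply ln_lt_2.
  assert (HinvN : 0 < 1 / N <= 1 / 16)
    by (split; [apply Rdiv_lt_0_compat | apply Rmult_le_compat_l, Rinv_le_contravar]; lra).
  assert (Hhalf : 1 / (2 * N) = 1 / N / 2) by (field; lra).
  assert (Ha : 0 < a < 1/2) by (split; [apply pow_lt |]; lra).
  assert (Hv : 0 < Psi_hat (S n) (1/2 - 1/(2 * N))).
  { unfold Psi_hat. rewrite Nat.sub_succ, Nat.sub_0_r. fold a.
    apply Rdiv_lt_0_compat; lra. }
  specialize (Hlnv Ha).
  set (c := (N - 2) * (m + 1) * L - 1) in *.
  assert (Hc : 0 <= c).
  { assert (70 <= (N - 2) * (m + 1)) by nra. unfold c. nra. }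
  assert (Hdc : c <= d - 1) by (unfold c; lra).
  apply Rpower_mul_lt; [exact Hv | lra | lra |]. fold L.
  assert (Hexponent : (d - 1) * ln (Psi_hat (S n) (1/2 - 1/(2 * N))) <= - ((d - 1) * a))
    by nra.
  assert (Hproduct : c * (1 / N * (1 - m / N)) <= (d - 1) * a) by nra.
  lra.
Qed.

Lemma ratio_3410_3753_pow_lt : (3410 / 3753) ^ 157 < (2 / 9) ^ 10.
Proof.
  assert (Hint : 3410 ^ 157 * 9 ^ 10 < 2 ^ 10 * 3753 ^ 157).
  { rewrite !pow_IZR, <- !mult_IZR. apply IZR_lt. vm_compute. reflexivity. }
  unfold Rdiv. rewrite !Rpow_mult_distr, !pow_inv.
  assert (0 < 3753 ^ 157) by (apply pow_lt; lra).
  assert (0 < 9 ^ 10) by (apply pow_lt; lra).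
  apply (Rmult_lt_reg_r (3753 ^ 157 * 9 ^ 10)); [nra |].
  replace (3410 ^ 157 * / 3753 ^ 157 * (3753 ^ 157 * 9 ^ 10)) with (3410 ^ 157 * 9 ^ 10)
    by (field; lra).
  replace (2 ^ 10 * / 9 ^ 10 * (3753 ^ 157 * 9 ^ 10)) with (2 ^ 10 * 3753 ^ 157)
    by (field; lra).
  exact Hint.
Qed.

Lemma Rpower_Psi_hat_lt_k4 (d : R) :
  167 / 10 <= d -> Rpower (Psi_hat 4 (1/2 - 1/(2 * 2 ^ 3))) (d - 1) * (2 ^ 3 + 1) < 2.
Proof.
  intros Hd.
  replace (Psi_hat 4 (1/2 - 1/(2 * 2 ^ 3))) with (3410 / 3753)
    by (unfold Psi_hat; simpl; field).
  assert (He : INR 157 / INR 10 <= d - 1).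
  { rewrite !INR_IZR_INZ. cbv [Z.of_nat Pos.of_succ_nat Pos.succ]. lra. }
  assert (Hle := Rpower_le_base_le_1 (3410 / 3753) _ _ ltac:(lra) He).
  assert (Hlt := Rpower_div_lt (3410 / 3753) (2 / 9) 157 10 ltac:(lra) ltac:(lra)
                   ltac:(lia) ratio_3410_3753_pow_lt).
  simpl. lra.
Qed.

Theorem lemma3p4 (k : nat) (d : R) :
  (4 <= k)%nat -> d_lbd k <= d <= d_ubd k ->
  Psi k d (1/2 - 1 / 2 ^ k) > 1/2 - 1 / 2 ^ k.
Proof.
  intros Hk [Hd _].
  destruct k as [|n]; [lia |].
  replace (2 ^ S n) with (2 * 2 ^ n) by (simpl; ring).
  apply Psi_dot_gt_half_sub; [apply pow_lt; lra |].
  unfold d_lbd in Hd.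
  destruct (Nat.eq_dec n 3) as [-> | Hn3].
  - apply Rpower_Psi_hat_lt_k4, Hd.
  - rewrite (proj2 (Nat.eqb_neq (S n) 4)) in Hd by lia.
    rewrite Nat.sub_succ, Nat.sub_0_r in Hd.
    apply Rpower_Psi_hat_lt_k_ge_5; [lia | exact Hd].
Qed.
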